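(* Let $S\subseteq\mathbb{R}^m$ be a condensed space and let $I\subseteq\mathscr{C}(S)[x_1,\dots,x_n]$ be a condensed ideal. Then $I$ is finitely generated.
   Context: $S\subseteq\mathbb{R}^m$ carries the Euclidean subspace topology; $\mathscr{C}(S)$ is the ring of continuous complex-valued functions on $S$. A polynomial function on $S$ is the restriction to $S$ of a polynomial in the $m$ real coordinates with complex coefficients; $\mathscr{P}(S)$ is the ring of these. A real algebraic subset of $S$ is the common zero set in $S$ of finitely many elements of $\mathscr{P}(S)$. $S$ is condensed if every real algebraic subset $V\subseteq S$ with $V\neq S$ is nowhere dense in $S$. $\mathscr{R}(S)=\{f/g: f,g\in\mathscr{P}(S),\ g \text{ has no zero on } S\}$. An ideal $I\subseteq\mathscr{C}(S)[x_1,\dots,x_n]$ is condensed if it is generated by some elements of $\mathscr{R}(S)[x_1,\dots,x_n]$. *)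

From HB Require Import structures.
From mathcomp Require Import all_boot all_order all_algebra.
From mathcomp Require Import reals.
From mathcomp Require Import complex.
From mathcomp Require Import mpoly.

Set Implicit Arguments. Unset Strict Implicit. Unset Printing Implicit Defensive.
Import Order.TTheory GRing.Theory Num.Theory.
Local Open Scope ring_scope.

Section CondensedDefs.
Variables (R : realType) (m n : nat).

Local Notation pt := 'rV[R]_m.
Local Notation C := (complex R).

Definition dist2 (x y : pt) : R := \sum_(i < m) (x 0 i - y 0 i) ^+ 2.

Definition pts (S : pt -> Prop) := {x : pt | S x}.

Definition cont_on (S : pt -> Prop) (f : pts S -> C) : Prop :=
  forall (p : pts S) (e : R), 0 < e ->
    exists2 d : R, 0 < d &
      forall q : pts S, dist2 (proj1_sig q) (proj1_sig p) < d ^+ 2 ->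
        `|f q - f p| < (e%:C)%C.

Definition peval (p : {mpoly C[m]}) (x : pt) : C :=
  p.@[fun i => ((x 0 i)%:C)%C].

Definition zero_set (S : pt -> Prop) (ps : seq {mpoly C[m]}) : pt -> Prop :=
  fun x => S x /\ (forall p, p \in ps -> peval p x = 0).

Definition rel_closure (S V : pt -> Prop) : pt -> Prop :=
  fun x => S x /\ forall e : R, 0 < e -> exists v, V v /\ dist2 v x < e ^+ 2.

Definition nowhere_dense_in (S V : pt -> Prop) : Prop :=
  ~ (exists p, S p /\ exists2 r : R, 0 < r &
       forall q, S q -> dist2 q p < r ^+ 2 -> rel_closure S V q).

Definition condensed (S : pt -> Prop) : Prop :=
  forall ps : seq {mpoly C[m]},
    ~ (forall x, zero_set S ps x <-> S x) -> nowhere_dense_in S (zero_set S ps).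

Definition rational_fun (S : pt -> Prop) (f : pts S -> C) : Prop :=
  exists (p q : {mpoly C[m]}),
    (forall x : pts S, peval q (proj1_sig x) != 0) /\
    (forall x : pts S, f x = peval p (proj1_sig x) / peval q (proj1_sig x)).

(* A polynomial in x_1..x_n with coefficients in a ring of functions S -> C is
   represented pointwise, as a map P : S -> C[x_1..x_n] with uniformly bounded
   degree; its coefficient at the monomial mon is s |-> (P s)@_mon. *)
Definition polyfun (S : pt -> Prop) := pts S -> {mpoly C[n]}.

Definition poly_over (S : pt -> Prop) (A : (pts S -> C) -> Prop)
    (P : polyfun S) : Prop :=
  (exists d : nat, forall s, (msize (P s) <= d)%N) /\
  (forall mon : 'X_{1..n}, A (fun s => (P s)@_mon)).

Definition CS_poly (S : pt -> Prop) := poly_over (@cont_on S).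
Definition RS_poly (S : pt -> Prop) := poly_over (@rational_fun S).

Definition ideal_gen (S : pt -> Prop) (G : polyfun S -> Prop)
    (P : polyfun S) : Prop :=
  exists (k : nat) (c g : 'I_k -> polyfun S),
    (forall i, CS_poly (c i)) /\ (forall i, G (g i)) /\
    (forall s, P s = \sum_(i < k) c i s * g i s).

Definition condensed_ideal (S : pt -> Prop) (I : polyfun S -> Prop) : Prop :=
  exists G : polyfun S -> Prop,
    (forall P, G P -> RS_poly P) /\ (forall P, I P <-> ideal_gen G P).

Definition fin_gen_ideal (S : pt -> Prop) (I : polyfun S -> Prop) : Prop :=
  exists (k : nat) (g : 'I_k -> polyfun S),
    (forall i, CS_poly (g i)) /\
    (forall P, I P <-> ideal_gen (fun Q => exists i, forall s, Q s = g i s) P).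

End CondensedDefs.

(* Write P in R(S)[x] as a/u, where a is a polynomial in C[y_1..y_m, x_1..x_n]
   specialised at y = s and u in C[y] has no zero on S.  By Hilbert's basis
   theorem the numerators of the generators of I all lie in the ideal of
   C[y, x] spanned by finitely many of them, g_1 .. g_k.  Specialising at
   y = s and dividing by the continuous, nowhere vanishing denominators turns
   this into an expression of every generator as a C(S)[x]-combination of
   g_1 .. g_k. *)

From mathcomp Require Import all_boot all_order all_algebra reals complex mpoly.
From mathcomp Require Import ring lra.
From Stdlib Require Import ClassicalEpsilon FunctionalExtensionality.

Set Implicit Arguments. Unset Strict Implicit. Unset Printing Implicit Defensive.
Import Order.TTheory GRing.Theory Num.Theory.
Local Open Scope ring_scope.

Section Dickson.
Variable N : nat.
Implicit Types (M : 'X_{1..N} -> Prop) (C : seq 'I_N).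

Definition mnm_le_on C (l x : 'X_{1..N}) := all (fun j => l j <= x j)%N C.

(* Induction on [C]: an [x] that does not dominate a fixed [a] on [C] has
   [x i < a i] for some [i] in [C], and each of the finitely many slices
   [x i = v], [v < a i], is handled on [rem i C]. *)
Lemma dickson_on k C M : (size C <= k)%N ->
  exists L : seq 'X_{1..N}, (forall l, l \in L -> M l) /\
    (forall x, M x -> exists2 l, l \in L & mnm_le_on C l x).
Proof.
elim: k C M => [|k IH] C M hC.
  have -> : C = [::] by case: C hC.
  have [[a Ma]|nM] := classic (exists x, M x); last first.
    by exists [::]; split => // x Mx; case: nM; exists x.
  exists [:: a]; split => [l|x _]; first by rewrite inE => /eqP ->.
  by exists a; rewrite ?inE.
have [[a Ma]|nM] := classic (exists x, M x); last first.
  by exists [::]; split => // x Mx; case: nM; exists x.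
have slice (iv : 'I_N * nat) : exists L : seq 'X_{1..N}, iv.1 \in C ->
    (forall l, l \in L -> M l /\ l iv.1 = iv.2) /\
    (forall x, M x -> x iv.1 = iv.2 ->
       exists2 l, l \in L & mnm_le_on (rem iv.1 C) l x).
  case: iv => i v /=; have [iC|] := boolP (i \in C); last by exists [::].
  have hs : (size (rem i C) <= k)%N by rewrite size_rem //; case: (size C) hC.
  have [L [LM LC]] := IH (rem i C) (fun x => M x /\ x i = v) hs.
  by exists L => _; split => // x Mx xi; apply: LC.
have [F HF] := ClassicalEpsilon.choice _ slice.
exists (a :: flatten [seq flatten [seq F (i, v) | v <- iota 0 (a i)] | i <- C]).
split=> [l|x Mx].
  rewrite inE => /orP[/eqP -> //|/flatten_mapP [i iC /flatten_mapP [v _ lF]]].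
  by have [/(_ _ lF) []] := HF (i, v) iC.
have [hax|] := boolP (mnm_le_on C a x); first by exists a; rewrite ?inE ?eqxx.
case/allPn => i iC; rewrite -ltnNge => xi.
have [sliceM sliceL] := HF (i, x i) iC.
have [l lF hl] := sliceL x Mx (erefl _).
exists l.
  rewrite inE; apply/orP; right; apply/flatten_mapP; exists i => //.
  by apply/flatten_mapP; exists (x i) => //; rewrite mem_iota add0n.
apply/allP => j jC; have [->|ji] := eqVneq j i; first by rewrite (sliceM _ lF).2.
by move/allP: hl; apply; apply: rem_mem.
Qed.

Lemma dickson M : exists L : seq 'X_{1..N}, (forall l, l \in L -> M l) /\
  (forall x, M x -> exists2 l, l \in L & (l <= x)%MM).
Proof.
have [L [LM HL]] := @dickson_on N (enum 'I_N) M (eq_leq (size_enum_ord N)).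
exists L; split => // x /HL [l lL hl]; exists l => //.
by apply/mnm_lepP => i; move/allP: hl; apply; rewrite mem_enum.
Qed.

End Dickson.

Section HilbertBasis.
Variables (K : fieldType) (N : nat).
Local Notation P := {mpoly K[N]}.
Implicit Types (U V : seq P) (p q : P).

Definition in_ideal U p := exists cs : seq P, p = \sum_(i < size U) cs`_i * U`_i.

Lemma in_ideal0 U : in_ideal U 0.
Proof. by exists [::]; rewrite big1 // => i _; rewrite nth_nil mul0r. Qed.

Lemma in_idealDM U p q r : in_ideal U p -> in_ideal U q -> in_ideal U (p + r * q).
Proof.
move=> [cp ->] [cq ->]; exists (mkseq (fun i => cp`_i + r * cq`_i) (size U)).
rewrite mulr_sumr -big_split /=; apply: eq_bigr => i _.
by rewrite nth_mkseq // mulrDl mulrA.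
Qed.

Lemma mem_in_ideal U u : u \in U -> in_ideal U u.
Proof.
move=> uU; have iu : (index u U < size U)%N by rewrite index_mem.
exists (mkseq (fun i => (i == index u U)%:R) (size U)).
rewrite (bigD1 (Ordinal iu)) // big1 /= => [|i /eqP ni].
  by rewrite nth_mkseq // eqxx mul1r nth_index ?addr0.
rewrite nth_mkseq //.
have /negbTE -> : (i : nat) != index u U by apply/eqP => ie; apply: ni; apply: val_inj.
by rewrite mul0r.
Qed.

Lemma in_ideal_trans U V p :
  (forall u, u \in U -> in_ideal V u) -> in_ideal U p -> in_ideal V p.
Proof.
move=> UV [c ->]; elim/big_rec: _ => [|i q _ Vq]; first exact: in_ideal0.
by rewrite addrC; apply: in_idealDM => //; apply/UV/mem_nth.
Qed.

Lemma in_ideal_catl U V p : in_ideal U p -> in_ideal (U ++ V) p.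
Proof. by apply: in_ideal_trans => u uU; apply: mem_in_ideal; rewrite mem_cat uU. Qed.

Lemma in_ideal_catr U V p : in_ideal V p -> in_ideal (U ++ V) p.
Proof.
by apply: in_ideal_trans => u uV; apply: mem_in_ideal; rewrite mem_cat uV orbT.
Qed.

Lemma mlead_reduce p h : h != 0 -> (mlead h <= mlead p)%MM ->
  exists r : P, p - r * h = 0 \/ (mlead (p - r * h) < mlead p)%O.
Proof.
move=> h0 hp; have [->|p0] := eqVneq p 0; first by exists 0; left; rewrite mul0r subr0.
set e := (mlead p - mlead h)%MM; exists ((mleadc p / mleadc h) *: 'X_[e]).
have X0 : 'X_[e] != 0 :> P by rewrite -mleadc_eq0 mleadXm mcoeffX eqxx oner_neq0.
have leadXh : mlead ('X_[e] * h) = mlead p by rewrite mleadM // mleadXm /e submK.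
have -> : (mleadc p / mleadc h) *: 'X_[e] * h = (mleadc p / mleadc h) *: ('X_[e] * h).
  by rewrite -scalerAl.
set q := p - _; have [->|q0] := eqVneq q 0; [by left | right].
have q_top : q@_(mlead p) = 0.
  have coefXh : ('X_[e] * h)@_(mlead p) = mleadc h.
    by rewrite -leadXh mleadM // mleadcM mleadXm mcoeffX eqxx mul1r.
  by rewrite mcoeffB mcoeffZ coefXh divfK ?subrr // mleadc_eq0.
have q_gt m : (mlead p < m)%O -> q@_m = 0.
  move=> pm; rewrite mcoeffB mcoeffZ (mcoeff_gt_mlead pm).
  by rewrite (mcoeff_gt_mlead (p := 'X_[e] * h)) ?leadXh // mulr0 subrr.
rewrite lt_neqAle; apply/andP; split.
  by apply/eqP => qp; move: (mlead_supp q0); rewrite mcoeff_msupp qp q_top eqxx.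
by rewrite leNgt; apply/negP => /q_gt; apply/eqP; rewrite -mcoeff_msupp mlead_supp.
Qed.

Lemma mpoly_ideal_fin_gen (J : P -> Prop) :
  J 0 -> (forall p q r, J p -> J q -> J (p + r * q)) ->
  exists H : seq P, (forall h, h \in H -> J h) /\ (forall p, J p -> in_ideal H p).
Proof.
move=> J0 JDM; pose lead_of x := exists p, [/\ J p, p != 0 & mlead p = x].
have [L [L_lead L_min]] := dickson lead_of.
have pick x : exists h, lead_of x -> [/\ J h, h != 0 & mlead h = x].
  by have [[h hh]|nh] := classic (lead_of x); [exists h | exists 0].
have [F HF] := ClassicalEpsilon.choice _ pick.
exists (map F L); split=> [h /mapP [l /L_lead /HF [Jh _ _] ->] //|p Jp].
move: {2}(mlead p) (erefl (mlead p)) => x; elim/(well_founded_ind (@ltom_wf N)): x p Jp.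
move=> x IH p Jp px; have [->|p0] := eqVneq p 0; first exact: in_ideal0.
have [l lL lp] := L_min (mlead p) (ex_intro _ p (And3 Jp p0 (erefl _))).
have [Jh h0 hl] := HF l (L_lead l lL).
have [r red] : exists r, p - r * F l = 0 \/ (mlead (p - r * F l) < mlead p)%O.
  by apply: mlead_reduce h0 _; rewrite hl.
have -> : p = (p - r * F l) + r * F l by rewrite subrK.
apply: in_idealDM; last by apply/mem_in_ideal/map_f.
have Jq : J (p - r * F l) by rewrite -mulNr; apply: JDM.
case: red => [->|lt_qp]; first exact: in_ideal0.
by apply: IH Jq (erefl _); rewrite -px.
Qed.

Lemma mpoly_fin_gen_sub (T : P -> Prop) :
  exists T0 : seq P, (forall t, t \in T0 -> T t) /\ (forall t, T t -> in_ideal T0 t).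
Proof.
pose J p := exists U : seq P, (forall t, t \in U -> T t) /\ in_ideal U p.
have J0 : J 0 by exists [::]; split => //; apply: in_ideal0.
have JDM p q r : J p -> J q -> J (p + r * q).
  move=> [U [UT Up]] [V [VT Vq]]; exists (U ++ V); split.
    by move=> t; rewrite mem_cat => /orP[/UT|/VT].
  by apply: in_idealDM; [apply: in_ideal_catl | apply: in_ideal_catr].
have [H [HJ JH]] := mpoly_ideal_fin_gen J0 JDM.
have pick h : exists U : seq P, J h -> (forall t, t \in U -> T t) /\ in_ideal U h.
  by have [[U hU]|nJ] := classic (J h); [exists U | exists [::]].
have [F HF] := ClassicalEpsilon.choice _ pick.
exists (flatten (map F H)); split=> [t /flatten_mapP [h /HJ /HF [FT _] /FT] //|t Tt].
apply: (in_ideal_trans (U := H)); last first.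
  apply: JH; exists [:: t]; split=> [u|]; first by rewrite inE => /eqP ->.
  by apply: mem_in_ideal; rewrite inE.
move=> u uH; have [_ uF] := HF u (HJ u uH); apply: in_ideal_trans uF => v vF.
by apply: mem_in_ideal; apply/flatten_mapP; exists u.
Qed.

Lemma mpoly_fin_gen_image (X : Type) (G : X -> Prop) (f : X -> P) :
  exists (k : nat) (xs : 'I_k -> X), (forall i, G (xs i)) /\
    (forall x, G x -> exists c : 'I_k -> P, f x = \sum_(i < k) c i * f (xs i)).
Proof.
have [T0 [T0G GT0]] := mpoly_fin_gen_sub (fun t => exists2 x, G x & f x = t).
have pre (i : 'I_(size T0)) : exists x, G x /\ f x = T0`_i.
  by have [x Gx fx] := T0G _ (mem_nth 0 (ltn_ord i)); exists x.
have [xs Hxs] := ClassicalEpsilon.choice _ pre.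
exists (size T0), xs; split=> [i|x Gx]; first by case: (Hxs i).
have [cs ->] := GT0 (f x) (ex_intro2 _ _ x Gx erefl).
by exists (fun i => cs`_i); apply: eq_bigr => i _; case: (Hxs i) => _ ->.
Qed.

End HilbertBasis.

Section Continuity.
Variables (R : realType) (m : nat) (S : 'rV[R]_m -> Prop).
Local Notation C := (complex R).
Local Notation T := (pts S).
Implicit Types (f g : T -> C) (z : C).

(* The norm of [complex R] is [complex]-valued; [modc] is its real part. *)
Definition modc z : R := complex.Re `|z|.

Lemma modcE z : `|z| = (modc z)%:C%C.
Proof. by rewrite /modc normc_def. Qed.

Lemma modc_ge0 z : 0 <= modc z.
Proof. by rewrite -ler0c -modcE normr_ge0. Qed.

Lemma modcD z1 z2 : modc (z1 + z2) <= modc z1 + modc z2.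
Proof. by rewrite -lecR rmorphD /= -!modcE ler_normD. Qed.

Lemma modcM z1 z2 : modc (z1 * z2) = modc z1 * modc z2.
Proof. by apply: complexI; rewrite rmorphM /= -!modcE normrM. Qed.

Lemma modcV z : modc z^-1 = (modc z)^-1.
Proof. by apply: complexI; rewrite fmorphV /= -!modcE normfV. Qed.

Lemma modc_eq0 z : (modc z == 0) = (z == 0).
Proof. by rewrite -(inj_eq (@complexI R)) -modcE normr_eq0. Qed.

Lemma modc_real (r : R) : modc r%:C%C = `|r|.
Proof. by rewrite /modc normc_def /= expr0n /= addr0 sqrtr_sqr. Qed.

Lemma modc_subC z1 z2 : modc (z1 - z2) = modc (z2 - z1).
Proof. by apply: complexI; rewrite -!modcE distrC. Qed.

Definition near_pt (p : T) (Q : T -> Prop) :=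
  exists2 d : R, 0 < d & forall q : T, dist2 (sval q) (sval p) < d ^+ 2 -> Q q.

Lemma near_ptI p (Q1 Q2 : T -> Prop) :
  near_pt p Q1 -> near_pt p Q2 -> near_pt p (fun q => Q1 q /\ Q2 q).
Proof.
move=> [d1 d1_gt0 H1] [d2 d2_gt0 H2]; exists (Num.min d1 d2); first by rewrite lt_min d1_gt0.
have le_sq d : 0 < d -> Num.min d1 d2 <= d -> (Num.min d1 d2) ^+ 2 <= d ^+ 2.
  by move=> d_gt0 le_d; rewrite lerXn2r // nnegrE ltW // lt_min d1_gt0.
move=> q lt_q; split; [apply: H1 | apply: H2]; apply: lt_le_trans lt_q (le_sq _ _ _) => //.
  by rewrite ge_min lexx.
by rewrite ge_min lexx orbT.
Qed.

Definition cont_onR f :=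
  forall (p : T) (e : R), 0 < e -> near_pt p (fun q => modc (f q - f p) < e).

Lemma cont_onRE f : cont_on f <-> cont_onR f.
Proof.
split=> fc p e e_gt0; have [d d_gt0 Hd] := fc p e e_gt0.
  by exists d => // q /Hd; rewrite modcE ltcR.
by exists d => // q /Hd; rewrite modcE ltcR.
Qed.

Lemma eq_cont_onR f g : f =1 g -> cont_onR f -> cont_onR g.
Proof. by move=> /functional_extensionality ->. Qed.

Lemma cont_onR_cst z : cont_onR (fun=> z).
Proof. by move=> p e e_gt0; exists 1 => // q _; rewrite subrr /modc normr0. Qed.

Lemma cont_onRD f g : cont_onR f -> cont_onR g -> cont_onR (fun s => f s + g s).
Proof.
move=> fc gc p e e_gt0; have e2_gt0 : 0 < e / 2 by rewrite divr_gt0.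
have [d d_gt0 H] := near_ptI (fc p _ e2_gt0) (gc p _ e2_gt0).
exists d => // q /H [lt_f lt_g].
have -> : f q + g q - (f p + g p) = (f q - f p) + (g q - g p) by ring.
by apply: le_lt_trans (modcD _ _) _; lra.
Qed.

Lemma cont_onRM f g : cont_onR f -> cont_onR g -> cont_onR (fun s => f s * g s).
Proof.
move=> fc gc p e e_gt0; set A := modc (f p); set B := modc (g p).
have A_ge0 : 0 <= A by apply: modc_ge0.
have B_ge0 : 0 <= B by apply: modc_ge0.
have e1_gt0 : 0 < e / (2 * (B + 1)) by rewrite divr_gt0 // mulr_gt0 //; lra.
have e2_gt0 : 0 < e / (2 * (A + 1)) by rewrite divr_gt0 // mulr_gt0 //; lra.
have [d d_gt0 H] := near_ptI (fc p _ ltr01) (near_ptI (fc p _ e1_gt0) (gc p _ e2_gt0)).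
exists d => // q /H [lt_f1 []]; rewrite !ltr_pdivlMr ?mulr_gt0 //; try lra.
move=> lt_f lt_g.
have -> : f q * g q - f p * g p = f q * (g q - g p) + (f q - f p) * g p by ring.
apply: le_lt_trans (modcD _ _) _; rewrite !modcM.
have le_fq : modc (f q) <= A + modc (f q - f p).
  by have := modcD (f p) (f q - f p); rewrite addrC subrK.
move: (modc_ge0 (f q - f p)) (modc_ge0 (g q - g p)) (modc_ge0 (f q)).
set a := modc (f q - f p) in lt_f1 lt_f le_fq *; set b := modc (g q - g p) in lt_g *.
set F := modc (f q) in le_fq * => a_ge0 b_ge0 F_ge0.
have : F * b <= (A + 1) * b by apply: ler_wpM2r => //; lra.
nra.
Qed.

Lemma cont_onRV g : cont_onR g -> (forall s, g s != 0) -> cont_onR (fun s => (g s)^-1).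
Proof.
move=> gc g_neq0 p e e_gt0; set B := modc (g p).
have B_gt0 : 0 < B by rewrite lt_def modc_eq0 g_neq0 modc_ge0.
have e1_gt0 : 0 < B / 2 by rewrite divr_gt0.
have e2_gt0 : 0 < e * B * B / 2 by rewrite divr_gt0 // !mulr_gt0.
have [d d_gt0 H] := near_ptI (gc p _ e1_gt0) (gc p _ e2_gt0).
exists d => // q /H []; rewrite !ltr_pdivlMr // => lt_g1 lt_g2.
have -> : (g q)^-1 - (g p)^-1 = (g p - g q) / (g q * g p) by field; rewrite !g_neq0.
rewrite modcM modcV modcM modc_subC.
set b := modc (g q - g p) in lt_g1 lt_g2 *; set G := modc (g q).
have le_B : B <= G + b.
  by have := modcD (g q) (g p - g q); rewrite addrC subrK modc_subC.
have b_ge0 : 0 <= b by apply: modc_ge0.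
have G_gt0 : 0 < G by lra.
rewrite ltr_pdivrMr ?mulr_gt0 //.
have : 0 <= e * B * (G - B / 2) by rewrite !mulr_ge0 //; lra.
nra.
Qed.

Lemma cont_onR_coord (a : 'I_m) : cont_onR (fun s => (sval s 0 a)%:C%C).
Proof.
move=> p e e_gt0; exists e => // q lt_q; rewrite -rmorphB /= modc_real.
set x := sval q 0 a - sval p 0 a.
have le_x : x ^+ 2 <= dist2 (sval q) (sval p).
  by rewrite /dist2 (bigD1 a) //= lerDl sumr_ge0 // => i _; apply: sqr_ge0.
have : x ^+ 2 < e ^+ 2 by apply: le_lt_trans lt_q.
by rewrite ltr_norml => lt_x; apply/andP; split; nra.
Qed.

Lemma cont_onR_sum (I : Type) (r : seq I) (P : pred I) (F : I -> T -> C) :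
  (forall i, cont_onR (F i)) -> cont_onR (fun s => \sum_(i <- r | P i) F i s).
Proof.
move=> Fc; elim: r => [|i r IH].
  by apply: eq_cont_onR (cont_onR_cst 0) => s; rewrite big_nil.
have [Pi|nPi] := boolP (P i).
  by apply: eq_cont_onR (cont_onRD (Fc i) IH) => s; rewrite big_cons Pi.
by apply: eq_cont_onR IH => s; rewrite big_cons (negbTE nPi).
Qed.

Lemma cont_onR_prod (I : Type) (r : seq I) (P : pred I) (F : I -> T -> C) :
  (forall i, cont_onR (F i)) -> cont_onR (fun s => \prod_(i <- r | P i) F i s).
Proof.
move=> Fc; elim: r => [|i r IH].
  by apply: eq_cont_onR (cont_onR_cst 1) => s; rewrite big_nil.
have [Pi|nPi] := boolP (P i).
  by apply: eq_cont_onR (cont_onRM (Fc i) IH) => s; rewrite big_cons Pi.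
by apply: eq_cont_onR IH => s; rewrite big_cons (negbTE nPi).
Qed.

Lemma cont_onRX f k : cont_onR f -> cont_onR (fun s => f s ^+ k).
Proof.
move=> fc; elim: k => [|k IH]; first by apply: eq_cont_onR (cont_onR_cst 1) => s; rewrite expr0.
by apply: eq_cont_onR (cont_onRM fc IH) => s; rewrite exprS.
Qed.

Lemma cont_onR_peval (p : {mpoly C[m]}) : cont_onR (fun s => peval p (sval s)).
Proof.
elim/mpolyind: p => [|c M p _ _ IH].
  by apply: eq_cont_onR (cont_onR_cst 0) => s; rewrite /peval meval0.
have cX : cont_onR (fun s => \prod_(i < m) (sval s 0 i)%:C%C ^+ M i).
  by apply: cont_onR_prod => i; apply/cont_onRX/cont_onR_coord.
apply: eq_cont_onR (cont_onRD (cont_onRM (cont_onR_cst c) cX) IH) => s.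
by rewrite /peval mevalD mevalZ mevalX.
Qed.

Lemma rational_fun_cont f : rational_fun f -> cont_on f.
Proof.
move=> [p [q [q_neq0 fE]]]; apply/cont_onRE.
apply: eq_cont_onR (cont_onRM (cont_onR_peval p) (cont_onRV (cont_onR_peval q) q_neq0)) => s.
by rewrite fE.
Qed.

End Continuity.

Section CSPoly.
Variables (R : realType) (m n : nat) (S : 'rV[R]_m -> Prop).
Local Notation C := (complex R).
Local Notation T := (pts S).
Local Notation PF := (polyfun n S).
Implicit Types P Q : PF.

Lemma CS_polyP P : CS_poly P <->
  (exists d, forall s, (msize (P s) <= d)%N) /\ (forall mon, cont_onR (fun s => (P s)@_mon)).
Proof. by split=> -[Pd Pc]; split=> // mon; apply/cont_onRE. Qed.

Lemma eq_CS_poly P Q : P =1 Q -> CS_poly P -> CS_poly Q.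
Proof. by move=> /functional_extensionality ->. Qed.

Lemma CS_poly_cst (p : {mpoly C[n]}) : CS_poly (fun _ : T => p).
Proof. by apply/CS_polyP; split=> [|mon]; [exists (msize p) | apply: cont_onR_cst]. Qed.

Lemma CS_polyC (f : T -> C) : cont_onR f -> CS_poly (fun s => (f s)%:MP_[n]).
Proof.
move=> fc; apply/CS_polyP; split=> [|mon].
  by exists 1%N => s; rewrite msizeC; case: (_ != _).
apply: eq_cont_onR (cont_onRM fc (cont_onR_cst (mon == 0%MM)%:R)) => s.
by rewrite mcoeffC.
Qed.

Lemma CS_polyD P Q : CS_poly P -> CS_poly Q -> CS_poly (fun s => P s + Q s).
Proof.
move=> /CS_polyP [[d1 P_d1] Pc] /CS_polyP [[d2 Q_d2] Qc]; apply/CS_polyP; split=> [|mon].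
  exists (maxn d1 d2) => s; apply: leq_trans (msizeD_le _ _) _.
  by rewrite geq_max !leq_max P_d1 Q_d2 orbT.
by apply: eq_cont_onR (cont_onRD (Pc mon) (Qc mon)) => s; rewrite mcoeffD.
Qed.

Lemma CS_polyM P Q : CS_poly P -> CS_poly Q -> CS_poly (fun s => P s * Q s).
Proof.
move=> /CS_polyP [[d1 P_d1] Pc] /CS_polyP [[d2 Q_d2] Qc]; apply/CS_polyP; split=> [|mon].
  exists (d1 + d2).+1 => s; apply: leq_trans (msizeM_le _ _) _.
  by rewrite ltnS leq_add.
pose D := (mdeg mon).+1.
have := cont_onR_sum (index_enum _) (fun k : 'X_{1..n < D, D} => mon == (k.1 + k.2)%MM)
  (fun k => cont_onRM (Pc k.1) (Qc k.2)).
by apply: eq_cont_onR => s; rewrite mcoeffM.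
Qed.

Lemma CS_poly_sum (I : Type) (r : seq I) (p : pred I) (F : I -> PF) :
  (forall i, CS_poly (F i)) -> CS_poly (fun s => \sum_(i <- r | p i) F i s).
Proof.
move=> Fc; elim: r => [|i r IH].
  by apply: eq_CS_poly (CS_poly_cst 0) => s; rewrite big_nil.
have [pi|npi] := boolP (p i).
  by apply: eq_CS_poly (CS_polyD (Fc i) IH) => s; rewrite big_cons pi.
by apply: eq_CS_poly IH => s; rewrite big_cons (negbTE npi).
Qed.

Lemma CS_poly_prod (I : Type) (r : seq I) (p : pred I) (F : I -> PF) :
  (forall i, CS_poly (F i)) -> CS_poly (fun s => \prod_(i <- r | p i) F i s).
Proof.
move=> Fc; elim: r => [|i r IH].
  by apply: eq_CS_poly (CS_poly_cst 1) => s; rewrite big_nil.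
have [pi|npi] := boolP (p i).
  by apply: eq_CS_poly (CS_polyM (Fc i) IH) => s; rewrite big_cons pi.
by apply: eq_CS_poly IH => s; rewrite big_cons (negbTE npi).
Qed.

Lemma CS_polyX P k : CS_poly P -> CS_poly (fun s => P s ^+ k).
Proof.
move=> Pc; elim: k => [|k IH]; first by apply: eq_CS_poly (CS_poly_cst 1) => s; rewrite expr0.
by apply: eq_CS_poly (CS_polyM Pc IH) => s; rewrite exprS.
Qed.

Lemma RS_CS_poly P : RS_poly P -> CS_poly P.
Proof. by move=> [Pd Pr]; split=> // mon; apply: rational_fun_cont. Qed.

End CSPoly.

Lemma eq_mmap (k : nat) (A B : nzRingType) (f1 f2 : A -> B) (h1 h2 : 'I_k -> B) p :
  f1 =1 f2 -> h1 =1 h2 -> mmap f1 h1 p = mmap f2 h2 p.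
Proof.
move=> f12 h12; apply: eq_bigr => M _; rewrite f12; congr (_ * _).
exact: mmap1_eq.
Qed.

Lemma rmorph_mmap (k : nat) (A0 : nzRingType) (A B : comNzRingType)
    (g : {rmorphism A -> B}) (f : A0 -> A) (h : 'I_k -> A) p :
  g (mmap f h p) = mmap (g \o f) (g \o h) p.
Proof.
rewrite rmorph_sum; apply: eq_bigr => M _; rewrite rmorphM rmorph_prod.
by congr (_ * _); apply: eq_bigr => i _; rewrite rmorphXn.
Qed.

Section Specialization.
Variables (R : realType) (m n : nat) (S : 'rV[R]_m -> Prop).
Local Notation C := (complex R).

(* Polynomials in [m + n] variables [y_1 .. y_m, x_1 .. x_n]; [spec_at v a]
   substitutes the point [v] for [y]. *)
Definition spec_var (v : 'rV[R]_m) (i : 'I_(m + n)) : {mpoly C[n]} :=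
  match split i with inl a => (v 0 a)%:C%C%:MP | inr b => 'X_b end.

Definition spec_at v (a : {mpoly C[m + n]}) : {mpoly C[n]} :=
  mmap (@mpolyC n C) (spec_var v) a.

Definition lift_y (r : {mpoly C[m]}) : {mpoly C[m + n]} :=
  mmap (@mpolyC (m + n) C) (fun a => 'X_(lshift n a)) r.

Definition monom_x (mon : 'X_{1..n}) : {mpoly C[m + n]} :=
  mmap1 (fun j => 'X_(rshift m j)) mon.

Lemma spec_at_lift_y v r : spec_at v (lift_y r) = (peval r v)%:MP.
Proof.
rewrite /spec_at /lift_y rmorph_mmap /peval.
rewrite -[_%:MP]/(mpolyC n (mmap idfun (fun i => (v 0 i)%:C%C) r)).
rewrite (rmorph_mmap (@mpolyC n C)).
apply: eq_mmap => [c|a] /=; first by rewrite mmapC.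
by rewrite mmapX mmap1U /spec_var (unsplitK (inl a : 'I_m + 'I_n)).
Qed.

Lemma spec_at_monom_x v mon : spec_at v (monom_x mon) = 'X_[mon].
Proof.
rewrite /monom_x /mmap1 /spec_at rmorph_prod mpolyXE_id; apply: eq_bigr => j _.
by rewrite rmorphXn /= mmapX mmap1U /spec_var (unsplitK (inr j : 'I_m + 'I_n)).
Qed.

Lemma CS_poly_spec_at a : CS_poly (fun s : pts S => spec_at (sval s) a).
Proof.
have var_c i : CS_poly (fun s : pts S => spec_var (sval s) i).
  rewrite /spec_var; case: (split i) => [a'|b]; last exact: CS_poly_cst.
  by apply: CS_polyC; apply: cont_onR_coord.
elim/mpolyind: a => [|c M p _ _ IH].
  by apply: eq_CS_poly (CS_poly_cst S 0) => s; rewrite /spec_at mmap0.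
have cX := CS_poly_prod (index_enum 'I_(m + n)) xpredT
  (fun i => CS_polyX (M i) (var_c i)).
apply: eq_CS_poly (CS_polyD (CS_polyM (CS_poly_cst S c%:MP) cX) IH) => s.
by rewrite /spec_at mmapD mmapZ mmapX.
Qed.

End Specialization.

Section Ideals.
Variables (R : realType) (m n : nat) (S : 'rV[R]_m -> Prop).
Local Notation PF := (polyfun n S).
Implicit Types (G H : PF -> Prop) (P : PF).

Definition CS_comb k (g : 'I_k -> PF) P :=
  exists c : 'I_k -> PF,
    (forall i, CS_poly (c i)) /\ (forall s, P s = \sum_(i < k) c i s * g i s).

Lemma ideal_gen_mono G H P :
  (forall Q, G Q -> H Q) -> ideal_gen G P -> ideal_gen H P.
Proof.
by move=> GH [k [c [g [cC [Gg PE]]]]]; exists k, c, g; split=> //; split=> // i; apply: GH.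
Qed.

Lemma CS_comb_ideal_gen k (g : 'I_k -> PF) P :
  CS_comb g P -> ideal_gen (fun Q => exists i, forall s, Q s = g i s) P.
Proof. by move=> [c [cC PE]]; exists k, c, g; split=> //; split=> // i; exists i. Qed.

Lemma ideal_gen_CS_comb G k (g : 'I_k -> PF) P :
  (forall Q, G Q -> CS_comb g Q) -> ideal_gen G P -> CS_comb g P.
Proof.
move=> Gg [l [c [h [cC [Gh PE]]]]].
have [d dE] := ClassicalEpsilon.choice _ (fun j => Gg _ (Gh j)).
exists (fun i s => \sum_(j < l) c j s * d j i s); split=> [i|s].
  by apply: CS_poly_sum => j; apply: CS_polyM => //; case: (dE j).
rewrite PE; under eq_bigr => j _ do rewrite (proj2 (dE j) s) mulr_sumr.
rewrite exchange_big /=; apply: eq_bigr => i _.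
by rewrite mulr_suml; apply: eq_bigr => j _; rewrite mulrA.
Qed.

End Ideals.

Section Fractions.
Variables (R : realType) (m n : nat) (S : 'rV[R]_m -> Prop).
Local Notation C := (complex R).
Local Notation T := (pts S).
Local Notation PF := (polyfun n S).

Lemma peval_prod (I : Type) (r : seq I) (p : pred I) (F : I -> {mpoly C[m]}) v :
  peval (\prod_(i <- r | p i) F i) v = \prod_(i <- r | p i) peval (F i) v.
Proof. exact: (big_morph _ (mevalM _) (meval1 _)). Qed.

Definition fraction_repr (a : {mpoly C[m + n]}) (u : {mpoly C[m]}) (P : PF) :=
  (forall s : T, peval u (sval s) != 0) /\
  (forall s : T, spec_at (sval s) a = (peval u (sval s))%:MP * P s).

Lemma RS_poly_fraction (P : PF) : RS_poly P -> exists a u, fraction_repr a u P.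
Proof.
move=> [[d P_d] Pr].
have coef_frac (mon : 'X_{1..n < d}) : exists uv : {mpoly C[m]} * {mpoly C[m]},
    (forall s : T, peval uv.2 (sval s) != 0) /\
    (forall s : T, (P s)@_mon = peval uv.1 (sval s) / peval uv.2 (sval s)).
  by have [u [v [v_neq0 Pmon]]] := Pr mon; exists (u, v).
have [F HF] := ClassicalEpsilon.choice _ coef_frac.
exists (\sum_(mon : 'X_{1..n < d})
  lift_y n ((F mon).1 * \prod_(mon' | mon' != mon) (F mon').2) * monom_x R m mon).
exists (\prod_(mon : 'X_{1..n < d}) (F mon).2); split=> s.
  by rewrite peval_prod; apply/prodf_neq0 => mon _; apply: (HF mon).1.
rewrite (mpolywE (P_d s)) mul_mpolyC scaler_sumr /spec_at rmorph_sum.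
apply: eq_bigr => mon _ /=.
rewrite rmorphM /= -!/(spec_at _ _) spec_at_lift_y spec_at_monom_x mul_mpolyC scalerA.
congr (_ *: _); rewrite (HF mon).2 /peval mevalM -!/(peval _ _) !peval_prod.
by rewrite [in RHS](bigD1 mon) //=; field; apply: (HF mon).1.
Qed.

Lemma fraction_repr_comb k (g : 'I_k -> PF) (b c : 'I_k -> {mpoly C[m + n]})
    (v : 'I_k -> {mpoly C[m]}) a u P :
  fraction_repr a u P -> (forall i, fraction_repr (b i) (v i) (g i)) ->
  a = \sum_(i < k) c i * b i ->
  CS_comb g P.
Proof.
move=> [u_neq0 aP] gi aE.
exists (fun i s => spec_at (sval s) (c i) * (peval (v i) (sval s) / peval u (sval s))%:MP).
split=> [i|s].
  apply: CS_polyM; first exact: CS_poly_spec_at.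
  apply: CS_polyC; apply: cont_onRM; first exact: cont_onR_peval.
  by apply: cont_onRV => //; apply: cont_onR_peval.
have {aP} := aP s; rewrite aE /spec_at rmorph_sum -/(spec_at _ _) => aP.
have -> : P s = (peval u (sval s))^-1%:MP * ((peval u (sval s))%:MP * P s).
  by rewrite mulrA -mpolyCM mulVf ?u_neq0 // mpolyC1 mul1r.
rewrite -aP mulr_sumr; apply: eq_bigr => i _.
by rewrite rmorphM /= -!/(spec_at _ _) (gi i).2 !mpolyCM; ring.
Qed.

Lemma RS_ideal_fin_basis G : (forall P, G P -> RS_poly P) ->
  exists k (g : 'I_k -> PF), (forall i, G (g i)) /\ (forall P, G P -> CS_comb g P).
Proof.
move=> GRS; have frac P : exists au, G P -> fraction_repr au.1 au.2 P.
  have [GP|nGP] := classic (G P); last by exists (0, 0).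
  by have [a [u Pau]] := RS_poly_fraction (GRS P GP); exists (a, u).
have [F FE] := ClassicalEpsilon.choice _ frac.
have [k [g [Gg numE]]] := mpoly_fin_gen_image G (fun P => (F P).1).
exists k, g; split=> // P GP; have [c aE] := numE P GP.
exact: fraction_repr_comb (FE P GP) (fun i => FE _ (Gg i)) aE.
Qed.

End Fractions.

Theorem mainTheorem5 (R : realType) (m n : nat) (S : 'rV[R]_m -> Prop)
    (I : polyfun n S -> Prop) :
  condensed S -> condensed_ideal I -> fin_gen_ideal I.
Proof.
move=> _ [G [GRS IE]].
have [k [g [Gg Gcomb]]] := RS_ideal_fin_basis GRS.
exists k, g; split=> [i|P]; first by apply/RS_CS_poly/GRS.
rewrite IE; split=> [/(ideal_gen_CS_comb Gcomb)|]; first exact: CS_comb_ideal_gen.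
apply: ideal_gen_mono => Q [i /functional_extensionality ->]; exact: Gg.
Qed.
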